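(* Fix a server $\mathrm{SP}_i$, a finite horizon $T$, a privacy budget $\varepsilon>0$ and a positive integer $T_s$ (the maximum number of sampling timestamps). Let $S=(D_{i,1},\dots,D_{i,T})$ be the finite stream of crowd-sourced databases held by $\mathrm{SP}_i$, and let $f$ be an aggregate function with sensitivity $\Delta f$ (with respect to adding/removing/changing one user's record in a single database $D_{i,t}$). The algorithm DPCrowd, run at $\mathrm{SP}_i$ as described in the context, satisfies user-level $\varepsilon$-differential privacy for the users registered at $\mathrm{SP}_i$ over the finite stream of length $T$: for every pair of streams $S,S'$ that differ only in the records of a single user (at any subset of the $T$ timestamps) and for every measurable set $O$ of possible output sequences, $$\Pr[\mathrm{DPCrowd}(S)\in O]\le e^{\varepsilon}\Pr[\mathrm{DPCrowd}(S')\in O].$$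
   Context: Setting: $m$ servers in a decentralized (time-varying) communication network; server $\mathrm{SP}_i$ holds at each timestamp $t$ a database $D_{i,t}$ with one row per user registered at $\mathrm{SP}_i$ at time $t$ (each row is a 0/1 vector over $d$ regions with at most one 1), and computes the aggregate $x_i(t)=f(D_{i,t})$ (e.g. the number of its users in a given region, for which $\Delta f=1$). The sensitivity is $\Delta f=\max\|f(D)-f(D')\|_1$ over databases $D,D'$ differing in one record. $\mathrm{Lap}(b)$ denotes the zero-mean Laplace distribution with density $\frac{1}{2b}e^{-|v|/b}$. Algorithm DPCrowd at $\mathrm{SP}_i$: for $t=1,\dots,T$, compute $x_i(t)=f(D_{i,t})$. If $t$ is a sampling point (the sampling decision is made by an adaptive rule that depends only on quantities the algorithm previously released/computed from noisy values) and fewer than $T_s$ sampling points have been used so far, then release $z_i(t)=x_i(t)+\upsilon_i(t)$ with fresh independent noise $\upsilon_i(t)\sim\mathrm{Lap}(\Delta f\cdot T_s/\varepsilon)$, increment the sample counter, and compute from $z_i(t)$, the previous estimates, and messages received from one-hop neighboring servers (Kalman-consensus information filter prediction/update, message broadcast, and sampling-rate adjustment) the released estimate $r_i(t)$. Otherwise set $z_i(t)=r_i(t-1)$, broadcast nothing, and compute $r_i(t)$ from previous estimates and neighbors' messages via the filter update. Thus the only step accessing the true aggregates $x_i(t)$ is the Laplace perturbation at at most $T_s$ sampling timestamps; all other computations (including the outputs, which are the released estimates and broadcast messages) are functions of the noisy values and of information (neighbors' messages) not depending on $\mathrm{SP}_i$'s stream. User-level DP means neighboring streams differ in all events of one user.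 *)

From HB Require Import structures.
From mathcomp Require Import all_boot all_order all_algebra.
From mathcomp Require Import all_classical all_reals all_analysis.

Set Implicit Arguments.
Unset Strict Implicit.
Unset Printing Implicit Defensive.

Import Order.TTheory GRing.Theory Num.Theory.
Import numFieldNormedType.Exports.
Local Open Scope classical_set_scope.
Local Open Scope ring_scope.

(* A row: a 0/1 vector over the d regions. *)
Definition row (d : nat) := {ffun 'I_d -> bool}.

Definition row_ok (d : nat) (r : row d) : bool := (#|[set j | r j]| <= 1)%N.

(* Database of server SP_i at one timestamp: for each user of the (finite)
   user population U, either None (user not registered at that time) or
   Some r (the user's row r). *)
Definition db (U : finType) (d : nat) := {ffun U -> option (row d)}.

Definition db_ok (U : finType) (d : nat) (D : db U d) : bool :=
  [forall u, if D u is Some r then row_ok r else true].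

Definition db_adj (U : finType) (d : nat) (D D' : db U d) : bool :=
  [exists u, [forall v, (v != u) ==> (D v == D' v)]].

Definition sensitivity (R : realType) (U : finType) (d : nat) (f : db U d -> R) : R :=
  \big[Num.max/0]_(D : db U d)
    \big[Num.max/0]_(D' : db U d | [&& db_ok D, db_ok D' & db_adj D D'])
       `|f D - f D'|.

Definition user_neighbors (U : finType) (d T : nat) (S S' : nat -> db U d) : Prop :=
  exists u : U, forall t, (t < T)%N -> forall v, v != u -> S t v = S' t v.

Definition lap_pdf (R : realType) (b v : R) : R := (2 * b)^-1 * expR (- `|v| / b).

(* The algorithm is described by its (arbitrary) noise-free processing:
   - St      : internal state (estimates, filter quantities, last message, ...),
               the whole state is regarded as released (this only makes the
               privacy claim stronger; actual outputs are functions of it);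
   - s0      : initial state;
   - sample t s : adaptive sampling decision at timestamp t, a function of the
               state computed from previously released/noisy values only;
   - stepS t s z : new state at a sampling point, given the noisy value
               z = x(t) + noise (filter prediction/update, broadcast,
               sampling-rate adjustment; neighbours' messages, which do not
               depend on SP_i's stream, are absorbed in the dependence on t);
   - stepN t s : new state at a non-sampling point (z = r(t-1), filter update).
   The only access to the stream is x(t) = f (S t), perturbed by fresh Laplace
   noise of scale Delta f * Ts / eps at at most Ts sampling points.

   dpcrowd_run n t k s h O = probability that the complete output sequence
   lies in O, given that n timestamps remain, the current timestamp is t,
   k samples were used, the current state is s and h is the output history. *)
Section DPCrowd.
Variables (R : realType) (U : finType) (d : nat) (f : db U d -> R).
Variables (eps : R) (Ts : nat).
Variables (St : Type) (sample : nat -> St -> bool)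
          (stepS : nat -> St -> R -> St) (stepN : nat -> St -> St).
Variables (S : nat -> db U d) (O : set (seq St)).

Local Open Scope ereal_scope.

Fixpoint dpcrowd_run (n t k : nat) (s : St) (h : seq St) : \bar R :=
  match n with
  | 0 => (\1_O h)%:E
  | n'.+1 =>
    if sample t s && (k < Ts)%N then
      \int[lebesgue_measure]_(v in [set: R])
        ((lap_pdf (sensitivity f * Ts%:R / eps) v)%:E *
         (let s' := stepS t s (f (S t) + v) in
          dpcrowd_run n' t.+1 k.+1 s' (rcons h s')))
    else
      let s' := stepN t s in dpcrowd_run n' t.+1 k s' (rcons h s')
  end.

End DPCrowd.

Definition dpcrowd_prob (R : realType) (U : finType) (d : nat) (f : db U d -> R)
  (eps : R) (Ts : nat) (St : Type) (s0 : St) (sample : nat -> St -> bool)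
  (stepS : nat -> St -> R -> St) (stepN : nat -> St -> St)
  (T : nat) (S : nat -> db U d) (O : set (seq St)) : \bar R :=
  dpcrowd_run f eps Ts sample stepS stepN S O T 0 0 s0 [::].

From HB Require Import structures.
From mathcomp Require Import all_boot all_order all_algebra.
From mathcomp Require Import all_classical all_reals all_analysis.
From mathcomp Require Import ring lra zify.
Import Order.TTheory GRing.Theory Num.Theory.
Local Open Scope classical_set_scope.
Local Open Scope ring_scope.

(* Each sampled release is a Laplace mechanism of scale b = Δf·Ts/ε applied
   to a query of sensitivity Δf; everything else the algorithm does is
   post-processing of released values.  Translating the noise variable by the
   difference of the two true aggregates changes the Laplace density by at most
   a factor exp(Δf/b) = exp(ε/Ts), so by induction on the remaining horizon the
   output probability after k samples is at most exp((Ts - k)·ε/Ts) times that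
   of the neighbouring stream.  Since the state transitions are arbitrary maps,
   the integrands need not be measurable: translation invariance, monotonicity
   and scaling are proved for the integral as the supremum over simple
   functions below the integrand. *)

Section ge0_integral_measure_preserving.
Local Open Scope ereal_scope.
Context {d1 d2} {X : measurableType d1} {Y : measurableType d2} {R : realType}.
Variables (mu : {measure set X -> \bar R}) (nu : {measure set Y -> \bar R}).
Variables (phi : X -> Y) (mphi : measurable_fun [set: X] phi).
Hypothesis phi_preserving : forall A, measurable A -> mu (phi @^-1` A) = nu A.

Import HBNNSimple.

Section nnsfun_precomp.
Variable h : {nnsfun Y >-> R}.

Definition nnsfun_precomp : X -> R := fun x => h (phi x).

Let precomp_measurable : measurable_fun [set: X] nnsfun_precomp.
Proof. exact: measurableT_comp. Qed.
HB.instance Definition _ :=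
  isMeasurableFun.Build _ _ _ _ nnsfun_precomp precomp_measurable.

Let precomp_finite_image : finite_set (range nnsfun_precomp).
Proof.
by apply: sub_finite_set (@fimfunP _ _ h) => _ [x _ <-]; exists (phi x).
Qed.
HB.instance Definition _ := FiniteImage.Build _ _ _ precomp_finite_image.

Let precomp_ge0 x : (0 <= nnsfun_precomp x)%R. Proof. exact: fun_ge0. Qed.
HB.instance Definition _ := isNonNegFun.Build _ _ _ precomp_ge0.

Lemma sintegral_precomp : sintegral mu nnsfun_precomp = sintegral nu h.
Proof.
rewrite !sintegralET; apply: eq_fsbigr => r _; congr (_ * _).
apply: phi_preserving.
by rewrite -[X in measurable X]setTI; apply: measurable_funP.
Qed.

End nnsfun_precomp.

Lemma ge0_integralT_le_comp (F : Y -> \bar R) : (forall y, 0 <= F y) ->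
  \int[nu]_y F y <= \int[mu]_x F (phi x).
Proof.
move=> F0; rewrite !ge0_integralTE //.
apply: ge_ereal_sup => _ [h hF <-]; rewrite -sintegral_precomp.
by apply: ereal_sup_ubound; exists (nnsfun_precomp h : {nnsfun X >-> R}) => // x; apply: hF.
Qed.

End ge0_integral_measure_preserving.

Section ge0_integralT.
Local Open Scope ereal_scope.
Context {d} {T : measurableType d} {R : realType}.
Context {mu : {measure set T -> \bar R}}.

Import HBNNSimple.

Lemma ge0_le_integralT (F G : T -> \bar R) : (forall x, 0 <= F x) ->
  (forall x, F x <= G x) -> \int[mu]_x F x <= \int[mu]_x G x.
Proof.
move=> F0 FG; have G0 x : 0 <= G x := le_trans (F0 x) (FG x).
rewrite !ge0_integralTE //; apply: ereal_sup_le => _ [h hF <-].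
by exists h => // x; apply: le_trans (hF x) (FG x).
Qed.

Lemma ge0_integralTZl_le (F : T -> \bar R) (k : R) : (0 <= k)%R ->
  (forall x, 0 <= F x) -> \int[mu]_x (k%:E * F x) <= k%:E * \int[mu]_x F x.
Proof.
move=> k0 F0; have [->|kn0] := eqVneq k 0%R.
  by rewrite mul0e integral0_eq // => x _; rewrite mul0e.
have kF0 x : 0 <= k%:E * F x by apply: mule_ge0.
have k1_ge0 : (0 <= k^-1)%R by rewrite invr_ge0.
rewrite !ge0_integralTE //; apply: ge_ereal_sup => _ [h hF <-].
pose g := scale_nnsfun h k1_ge0.
have -> : sintegral mu h = k%:E * sintegral mu g.
  by rewrite -sintegralrM; apply: eq_sintegral => x /=; rewrite mulrA mulfV // mul1r.
apply: lee_wpmul2l; first by rewrite lee_fin.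
apply: ereal_sup_ubound; exists g => // x /=.
have := hF x; have := F0 x; case: (F x) => [r| |] //= _.
  by rewrite !lee_fin ler_pdivrMl // lt_def kn0 k0.
by rewrite leey.
Qed.

End ge0_integralT.

Section lebesgue_shift.
Local Open Scope ereal_scope.
Context {R : realType}.
Local Notation mu := (@lebesgue_measure R).

Lemma measurable_shift (c : R) :
  measurable_fun [set: R] (fun x => x + c)%R.
Proof. exact: measurable_realfun.measurable_funD. Qed.

Lemma lebesgue_measure_shift (c : R) (A : set R) : measurable A ->
  pushforward mu ((fun x => x + c)%R : _ -> measurableTypeR R) A = mu A.
Proof.
move=> mA; apply/esym/lebesgue_measure_unique => //=.
  exact: measurable_shift.
move=> _ _ [[a b]] _ <-; rewrite /pushforward.
have -> : (fun x => x + c)%R @^-1` `]a, b]%classic = `](a - c)%R, (b - c)%R]%classic.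
  by apply/seteqP; split => y /=; rewrite !in_itv /= ltrBlDr lerBrDr.
rewrite !lebesgue_measure_itv /= !lte_fin ltrD2r.
by case: ifP => // _; rewrite -EFinD; congr (_%:E); ring.
Qed.

Lemma ge0_integralT_shift (F : R -> \bar R) (c : R) : (forall x, 0 <= F x) ->
  \int[mu]_x F x = \int[mu]_x F (x + c)%R.
Proof.
have shift_le c' G : (forall x, 0 <= G x) -> \int[mu]_x G x <= \int[mu]_x G (x + c')%R.
  exact: (ge0_integralT_le_comp mu mu _ (measurable_shift c') (lebesgue_measure_shift c') G).
move=> F0; apply/eqP; rewrite eq_le shift_le //=.
apply: le_trans (shift_le (- c)%R _ _) _ => //.
by under eq_integral do rewrite addrNK.
Qed.

End lebesgue_shift.

Section laplace.
Context {R : realType}.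
Local Notation mu := (@lebesgue_measure R).
Variables (b : R) (b_gt0 : 0 < b).

Lemma lap_pdf_ge0 v : 0 <= lap_pdf b v.
Proof. by rewrite /lap_pdf mulr_ge0 ?expR_ge0 // invr_ge0 mulr_ge0 // ltW. Qed.

Lemma lap_pdfD_le v c : lap_pdf b (v + c) <= expR (`|c| / b) * lap_pdf b v.
Proof.
rewrite /lap_pdf mulrCA; apply: ler_wpM2l; first by rewrite invr_ge0 mulr_ge0 // ltW.
rewrite -expRD ler_expR -mulrDl; apply: ler_wpM2r; first by rewrite invr_ge0 ltW.
by have := ler_normB (v + c) c; rewrite addrK; lra.
Qed.

Local Open Scope ereal_scope.

Lemma laplace_shift_le (G : R -> \bar R) (x x' : R) : (forall z, 0 <= G z) ->
  \int[mu]_v ((lap_pdf b v)%:E * G (x + v)%R) <=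
  (expR (`|x' - x| / b))%:E * \int[mu]_v ((lap_pdf b v)%:E * G (x' + v)%R).
Proof.
move=> G0; have lapG0 y v : 0 <= (lap_pdf b v)%:E * G (y + v)%R.
  by rewrite mule_ge0 // lee_fin lap_pdf_ge0.
rewrite (ge0_integralT_shift _ (x' - x)) //.
under eq_integral => v _ do rewrite (addrCA x v) subrKC (addrC v x').
apply: le_trans _ (ge0_integralTZl_le _ _ (expR_ge0 _) _) => //.
apply: ge0_le_integralT => [v|v]; first by rewrite mule_ge0 // lee_fin lap_pdf_ge0.
by rewrite muleA -EFinM lee_wpmul2r // lee_fin lap_pdfD_le.
Qed.

Lemma laplace_step_le (G G' : R -> \bar R) (x x' Del C : R) : (0 <= C)%R ->
  (`|x' - x| <= Del)%R -> (forall z, 0 <= G z) -> (forall z, 0 <= G' z) ->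
  (forall z, G z <= C%:E * G' z) ->
  \int[mu]_v ((lap_pdf b v)%:E * G (x + v)%R) <=
  (expR (Del / b) * C)%:E * \int[mu]_v ((lap_pdf b v)%:E * G' (x' + v)%R).
Proof.
move=> C0 xx' G0 G'0 GG'.
have lap_ge0 v : 0 <= (lap_pdf b v)%:E by rewrite lee_fin lap_pdf_ge0.
apply: (@le_trans _ _ (C%:E * \int[mu]_v ((lap_pdf b v)%:E * G' (x + v)%R))).
  apply: le_trans _ (ge0_integralTZl_le _ _ C0 _) => [|v]; last exact: mule_ge0.
  apply: ge0_le_integralT => v; first exact: mule_ge0.
  by rewrite muleCA lee_wpmul2l.
rewrite mulrC EFinM -muleA lee_wpmul2l ?lee_fin //.
apply: le_trans (laplace_shift_le _ x x' G'0) _.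
rewrite lee_wpmul2r ?integral_ge0 // => [v _|]; first exact: mule_ge0.
by rewrite lee_fin ler_expR ler_wpM2r // invr_ge0 ltW.
Qed.

End laplace.

Lemma le_sensitivity (R : realType) (U : finType) (d : nat) (f : db U d -> R)
    (D D' : db U d) :
  db_ok D -> db_ok D' -> db_adj D D' -> `|f D - f D'| <= sensitivity f.
Proof.
move=> okD okD' adj; apply: le_trans (le_bigmax _ _ D).
by apply: le_bigmax_cond; rewrite okD okD' adj.
Qed.

Lemma user_neighbors_adj (U : finType) (d T : nat) (S S' : nat -> db U d) t :
  user_neighbors T S S' -> (t < T)%N -> db_adj (S t) (S' t).
Proof.
move=> [u Su] tT; apply/existsP; exists u; apply/forallP => v.
by apply/implyP => vu; rewrite Su.
Qed.

Section dpcrowd_privacy.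
Variables (R : realType) (U : finType) (d : nat) (f : db U d -> R).
Variables (eps : R) (Ts : nat) (St : Type) (sample : nat -> St -> bool).
Variables (stepS : nat -> St -> R -> St) (stepN : nat -> St -> St).
Variable O : set (seq St).
Hypotheses (eps_gt0 : 0 < eps) (Ts_gt0 : (0 < Ts)%N).
Hypothesis sensitivity_gt0 : 0 < sensitivity f.

Local Notation run S := (dpcrowd_run f eps Ts sample stepS stepN S O).
Local Notation b := (sensitivity f * Ts%:R / eps).

Let b_gt0 : 0 < b.
Proof. by rewrite divr_gt0 // mulr_gt0 // ltr0n. Qed.

Let sensitivity_over_b : sensitivity f / b = eps / Ts%:R.
Proof. by field; rewrite pnatr_eq0 -lt0n Ts_gt0 !gt_eqF. Qed.

Lemma dpcrowd_run_ge0 S n t k s h : (0 <= run S n t k s h)%E.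
Proof.
elim: n t k s h => [|n IH] t k s h /=; first by rewrite lee_fin indicE ler0n.
case: ifP => _ //; apply: integral_ge0 => v _.
by rewrite mule_ge0 // lee_fin lap_pdf_ge0.
Qed.

Lemma dpcrowd_run_le_expR S S' n t k s h :
  (forall u, (t <= u < t + n)%N -> `|f (S' u) - f (S u)| <= sensitivity f) ->
  (run S n t k s h <= (expR (eps / Ts%:R * (Ts - k)%:R))%:E * run S' n t k s h)%E.
Proof.
elim: n t k s h => [|n IH] t k s h /= near_SS'.
  rewrite lee_pemull ?lee_fin ?indicE ?ler0n // -expR0 ler_expR.
  by rewrite mulr_ge0 ?divr_ge0 ?ler0n // ltW.
have {}IH k' s' h' : (run S n t.+1 k' s' h' <=
    (expR (eps / Ts%:R * (Ts - k')%:R))%:E * run S' n t.+1 k' s' h')%E.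
  by apply: IH => u ut; apply: near_SS'; lia.
case: ifPn => [/andP[_ kTs]|_]; last exact: IH.
have -> : expR (eps / Ts%:R * (Ts - k)%:R) =
          expR (sensitivity f / b) * expR (eps / Ts%:R * (Ts - k.+1)%:R).
  by rewrite -expRD sensitivity_over_b -(subnSK kTs) mulrS; congr expR; ring.
pose G S0 z := let s' := stepS t s z in run S0 n t.+1 k.+1 s' (rcons h s').
apply: (laplace_step_le _ b_gt0 (G S) (G S')); first exact: expR_ge0.
- by apply: near_SS'; lia.
- by move=> z; apply: dpcrowd_run_ge0.
- by move=> z; apply: dpcrowd_run_ge0.
- by move=> z; apply: IH.
Qed.

End dpcrowd_privacy.

Theorem theorem4 (R : realType) (U : finType) (d T Ts : nat) (eps : R)
  (f : db U d -> R) (St : Type) (s0 : St) (sample : nat -> St -> bool)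
  (stepS : nat -> St -> R -> St) (stepN : nat -> St -> St)
  (S S' : nat -> db U d) (O : set (seq St)) :
  0 < eps -> (0 < Ts)%N -> 0 < sensitivity f ->
  (forall t, (t < T)%N -> db_ok (S t)) ->
  (forall t, (t < T)%N -> db_ok (S' t)) ->
  user_neighbors T S S' ->
  (dpcrowd_prob f eps Ts s0 sample stepS stepN T S O <=
   (expR eps)%:E * dpcrowd_prob f eps Ts s0 sample stepS stepN T S' O)%E.
Proof.
move=> eps_gt0 Ts_gt0 sens_gt0 okS okS' nbS.
have near_SS' t : (0 <= t < 0 + T)%N -> `|f (S' t) - f (S t)| <= sensitivity f.
  rewrite add0n => tT; rewrite distrC.
  by apply: le_sensitivity; [exact: okS | exact: okS' | exact: user_neighbors_adj nbS tT].
have -> : expR eps = expR (eps / Ts%:R * (Ts - 0)%:R).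
  by rewrite subn0 divfK // pnatr_eq0 -lt0n.
exact: dpcrowd_run_le_expR.
Qed.
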